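(* Fix a positive integer $r$. There are only finitely many tuples of positive integers $(d,e_1,\dots,e_r)$ satisfying all of the following: - $d > e_1 \ge e_2\ge\cdots\ge e_r$; - $e_k \mid d$ for every $k$; - $\sum_{k=1}^r (e_k+1) = d+1$. Equivalently, for each $r$ there are only finitely many ''neat'' canonical forms $p = \sum_{k=1}^r f_k^{d/e_k}$ (with $f_k\in H_{e_k}(\mathbb{C}^2)$) of the type in the following statement: for $m=0$, a general binary $d$-ic form is a sum $\sum_{k=1}^r f_k^{d/e_k}$ with $\deg f_k=e_k$ whenever the three conditions above hold.
   Context: $H_d(\mathbb{C}^n)$ denotes the complex vector space of homogeneous polynomials of degree $d$ in $n$ variables. *)

From mathcomp Require Import all_boot.
Set Implicit Arguments. Unset Strict Implicit. Unset Printing Implicit Defensive.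

(* A tuple (d, e_1, ..., e_r) is represented by d : nat and the sequence
   e = [:: e_1; ...; e_r] (so e_k = nth 0 e (k-1)). *)
Definition admissible (r d : nat) (e : seq nat) : Prop :=
  [/\ size e = r,
      0 < d /\ all (fun x => 0 < x) e,
      head 0 e < d /\ sorted geq e,
      all (fun x => x %| d) e &
      \sum_(x <- e) (x + 1) = d + 1].

From mathcomp Require Import all_boot.
From mathcomp Require Import zify.

(* Writing e_k = d / n_k, the conditions say that 1/n_1 + ... + 1/n_r
   = (d + 1 - r) / d < 1, so the admissible tuples are controlled by sums of
   r unit fractions lying strictly below 1.  The classical fact behind the
   theorem is that such sums stay uniformly away from their bound: for every
   r and every rational a/b there is M with a/b - sum_k 1/n_k >= 1/M whenever
   the sum is < a/b.  We prove it (lemma [unit_fraction_gap]) by induction on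
   r: if every summand is small the sum is at most half of a/b; otherwise
   some summand 1/n is large, so n takes one of finitely many values, and
   removing it leaves r - 1 unit fractions below the rational a/b - 1/n, to
   which the induction hypothesis applies.  Everything is stated without
   fractions, with e_k = d/n_k divisors of d.  For an admissible tuple the
   gap is (r - 1)/d, so d <= M (r - 1); all e_k divide d, hence the tuples
   lie in an explicit finite list. *)

Definition divisor_family (d : nat) (e : seq nat) : bool :=
  all (fun x => (0 < x) && (x %| d)) e.

(* For r-element divisor families e of d with sum(e)/d < a/b, the gap
   a/b - sum(e)/d is at least 1/M. *)
Definition gap_bounded (r a b M : nat) : Prop :=
  forall d (e : seq nat), size e = r -> divisor_family d e ->
    b * sumn e < a * d -> b * d <= M * (a * d - b * sumn e).

Lemma gap_bounded_mono r a b M M' :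
  M <= M' -> gap_bounded r a b M -> gap_bounded r a b M'.
Proof.
move=> leMM' gapM d e size_e div_e lt_sum.
by apply: leq_trans (gapM d e size_e div_e lt_sum) _; rewrite leq_mul2r leMM' orbT.
Qed.

(* An empty sum is at distance a/b >= 1/b from a/b. *)
Lemma gap_bounded_nil a b : gap_bounded 0 a b b.
Proof.
move=> d e /size0nil -> _ /=; rewrite !muln0 subn0 leq_mul2l.
by case: a => [|a] // _; rewrite mulSn leq_addr orbT.
Qed.

(* Finitely many instances of the induction hypothesis (one for each
   candidate n < N of the removed unit fraction 1/n) share a common bound. *)
Lemma gap_bounded_uniform r a b N :
  (forall a' b', exists M, gap_bounded r a' b' M) ->
  exists M, forall n, n < N -> gap_bounded r (a * n - b) (b * n) M.
Proof.
move=> IH; elim: N => [|N [M gapM]]; first by exists 0.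
have [M' gapM'] := IH (a * N - b) (b * N).
exists (maxn M M') => n; rewrite ltnS leq_eqVlt => /predU1P [-> | ltnN].
  by apply: gap_bounded_mono gapM'; rewrite leq_maxr.
by apply: gap_bounded_mono (gapM n ltnN); rewrite leq_maxl.
Qed.

Lemma gap_small_sum a b d s :
  b * s < a * d -> 2 * (b * s) <= a * d -> b * d <= 2 * b * (a * d - b * s).
Proof.
move=> lt_s half_s.
have le_half : a * d <= 2 * (a * d - b * s) by lia.
have le_d : d <= a * d by case: a lt_s {half_s le_half} => [|a] //; rewrite mulSn leq_addr.
rewrite -mulnA mulnCA; apply: leq_trans (leq_mul (leqnn b) le_half).
by rewrite leq_mul2l le_d orbT.
Qed.

Lemma large_element (e : seq nat) k c :
  size e * c < sumn e * k -> exists2 x, x \in e & c < x * k.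
Proof.
elim: e => [|x e IH] //=; rewrite mulSn mulnDl.
case: (ltnP c (x * k)) => [large_x _ | small_x lt_sum].
  by exists x; rewrite ?mem_head.
have [y y_e large_y] : exists2 y, y \in e & c < y * k.
  by apply: IH; move: lt_sum; lia.
by exists y; rewrite // inE y_e orbT.
Qed.

(* Removing one summand x = d/n turns the gap for e below a/b into a gap
   for the rest below a/b - 1/n = (a n - b)/(b n). *)
Lemma gap_remove r a b n M d (e : seq nat) x :
  gap_bounded r (a * n - b) (b * n) M ->
  size e = r.+1 -> divisor_family d e -> x \in e -> d = n * x ->
  b * sumn e < a * d -> b * d <= M * (a * d - b * sumn e).
Proof.
move=> gapM size_e div_e x_e d_nx lt_sum.
set e' := rem x e.
have sum_e : sumn e = x + sumn e' by rewrite (perm_sumn (perm_to_rem x_e)).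
have size_e' : size e' = r by rewrite size_rem // size_e.
have div_e' : divisor_family d e'.
  by apply/allP => y /mem_rem y_e; apply: (allP div_e y y_e).
have x_pos : 0 < x by have /andP[] := allP div_e x x_e.
subst d; rewrite sum_e in lt_sum *.
have lt_sum' : b * n * sumn e' < (a * n - b) * (n * x) by nia.
have := gapM _ _ size_e' div_e' lt_sum'.
have -> : (a * n - b) * (n * x) - b * n * sumn e'
          = n * (a * (n * x) - b * (x + sumn e')) by nia.
have n_pos : 0 < n by nia.
have -> : b * n * (n * x) = n * (b * (n * x)) by nia.
by rewrite [M * _]mulnCA (leq_pmul2l n_pos).
Qed.

Lemma gap_bound_succ r a b :
  (forall a' b', exists M, gap_bounded r a' b' M) ->
  exists M, gap_bounded r.+1 a b M.
Proof.
move=> IH; set N := 2 * b * r.+1.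
have [M gapM] := gap_bounded_uniform r a b N IH.
exists (maxn (2 * b) M) => d e size_e div_e lt_sum.
case: (leqP (N * sumn e) (r.+1 * (a * d))) => [small_sum | large_sum].
  have half_sum : 2 * (b * sumn e) <= a * d.
    by move: small_sum; rewrite /N -mulnA mulnC -!mulnA leq_pmul2l // mulnC -mulnA.
  apply: leq_trans (gap_small_sum a b d (sumn e) lt_sum half_sum) _.
  by rewrite leq_mul2r leq_maxl orbT.
have [x x_e large_x] : exists2 x, x \in e & a * d < x * N.
  by apply: large_element; rewrite size_e [sumn e * N]mulnC.
have /andP[x_pos /dvdnP [n d_nx]] := allP div_e x x_e.
have n_lt : n < N.
  have a_pos : 0 < a by case: (posnP a) lt_sum => [-> | //]; rewrite mul0n.
  rewrite -(ltn_pmul2r x_pos); apply: leq_ltn_trans (_ : n * x <= a * d) _.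
    by rewrite d_nx; apply: leq_pmull.
  by rewrite [N * x]mulnC.
apply: leq_trans (gap_remove r a b n M d e x (gapM n n_lt) size_e div_e x_e d_nx lt_sum) _.
by rewrite leq_mul2r leq_maxr orbT.
Qed.

Lemma unit_fraction_gap r a b : exists M, gap_bounded r a b M.
Proof.
elim: r a b => [|r IH] a b; first by exists b; apply: gap_bounded_nil.
exact: gap_bound_succ.
Qed.

Fixpoint bounded_seqs (n r : nat) : seq (seq nat) :=
  if r is r'.+1 then [seq x :: l | x <- iota 0 n, l <- bounded_seqs n r']
  else [:: [::]].

Lemma mem_bounded_seqs n (e : seq nat) :
  all (fun x => x < n) e -> e \in bounded_seqs n (size e).
Proof.
elim: e => [|x e IH] //= /andP [lt_x lt_e].
by apply: allpairs_f; [rewrite mem_iota | exact: IH].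
Qed.

Lemma sum_succ (e : seq nat) : \sum_(x <- e) (x + 1) = sumn e + size e.
Proof. by rewrite big_split /= sum1_size sumnE. Qed.

(* For an admissible tuple the e_k sum to less than d: r = 0 and r = 1 are
   impossible, since then sum (e_k + 1) <= e_1 + 1 < d + 1. *)
Lemma admissible_sumn_lt r d e : admissible r d e -> sumn e < d.
Proof.
case=> _ _ [head_lt _] _; rewrite sum_succ.
by case: e head_lt => [|x [|y e]] /=; lia.
Qed.

Lemma admissible_bounded r : exists B, forall d e, admissible r d e -> d < B.
Proof.
have [M gapM] := unit_fraction_gap r 1 1.
exists (M * r).+1 => d e adm; have lt_sum := admissible_sumn_lt r d e adm.
case: adm => size_e [d_pos pos_e] _ div_e; rewrite sum_succ => sum_e.
have div_fam : divisor_family d e.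
  by apply/allP => x x_e; rewrite (allP pos_e x x_e) (allP div_e x x_e).
have := gapM d e size_e div_fam; rewrite !mul1n ltnS => /(_ lt_sum) le_d.
by apply: leq_trans le_d _; rewrite leq_mul2l; apply/orP; right; lia.
Qed.

Theorem theorem4p4 (r : nat) (hr : 0 < r) :
  exists s : seq (nat * seq nat),
    forall (d : nat) (e : seq nat), admissible r d e -> (d, e) \in s.
Proof.
have [B lt_B] := admissible_bounded r.
exists [seq (d, l) | d <- iota 0 B, l <- bounded_seqs B r] => d e adm.
have d_lt := lt_B d e adm.
case: adm => size_e [d_pos _] _ div_e _.
apply: allpairs_f; first by rewrite mem_iota.
rewrite -size_e; apply: mem_bounded_seqs; apply/allP => x x_e.
exact: leq_ltn_trans (dvdn_leq d_pos (allP div_e x x_e)) d_lt.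
Qed.
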